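(* Let $F=(n_F)_{n\ge1}\in\mathcal{T}_\lambda$, with functions $\lambda_K,\lambda_M$ as in the definition of $\mathcal{T}_\lambda$. Then for all integers $n\ge2$ and $1\le k\le n-1$, $$\binom{n}{k}_F=\lambda_K(k,n-k)\binom{n-1}{k-1}_F+\lambda_M(k,n-k)\binom{n-1}{k}_F,$$ and $\binom{n}{n}_F=\binom{n}{0}_F=1$.
   Context: Throughout, $\mathbb{N}=\{1,2,\dots\}$. The family $\mathcal{T}_\lambda$ consists of sequences $F=(n_F)_{n\ge1}$ of natural numbers for which there exist functions $\lambda_K,\lambda_M:\mathbb{N}\times\mathbb{N}\to\mathbb{N}\cup\{0\}$ such that $(k+m)_F=\lambda_K(k,m)\,k_F+\lambda_M(k,m)\,m_F$ for all $k,m\in\mathbb{N}$. We write $n_F!=n_F(n-1)_F\cdots1_F$, with $0_F!=1$, and $\binom{n}{m}_F=\frac{n_F!}{m_F!(n-m)_F!}$. *)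

From mathcomp Require Import all_boot all_order all_algebra.
Set Implicit Arguments. Unset Strict Implicit. Unset Printing Implicit Defensive.
Import GRing.Theory Num.Theory.

(* A sequence F = (n_F)_{n>=1} is modelled as F : nat -> nat; the value F 0 is
   never used (all hypotheses and definitions only look at F n for n >= 1). *)

Definition Ffact (F : nat -> nat) (n : nat) : nat := \prod_(1 <= i < n.+1) F i.

Definition Fbinom (F : nat -> nat) (n m : nat) : rat :=
  ((Ffact F n)%:R / ((Ffact F m)%:R * (Ffact F (n - m))%:R))%R.

Definition in_T_lambda (F : nat -> nat) (lamK lamM : nat -> nat -> nat) : Prop :=
  (forall n, 0 < n -> 0 < F n) /\
  (forall k m, 0 < k -> 0 < m -> F (k + m) = lamK k m * F k + lamM k m * F m).

(* Write [n = k + m] with [k, m >= 1].  Peeling the top factor off [n_F!] and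
   substituting [n_F = lamK k_F + lamM m_F] splits [binom(n,k)_F] into two
   fractions; cancelling [k_F] against [k_F!] in the first and [m_F] against
   [m_F!] in the second leaves the two F-binomials of order [n - 1]. *)
From mathcomp Require Import all_boot all_order all_algebra.
From mathcomp Require Import ring zify.
Import GRing.Theory Num.Theory.

Set Implicit Arguments.
Unset Strict Implicit.

Lemma FfactS F n : Ffact F n.+1 = (F n.+1 * Ffact F n)%N.
Proof. by rewrite /Ffact big_nat_recr //= mulnC. Qed.

Lemma Ffact0 F : Ffact F 0 = 1%N.
Proof. by rewrite /Ffact big_nil. Qed.

Lemma Fbinom_addn F k m :
  Fbinom F (k + m) k = ((Ffact F (k + m))%:R / ((Ffact F k)%:R * (Ffact F m)%:R))%R.
Proof. by rewrite /Fbinom addKn. Qed.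

Section PositiveSequence.

Variable F : nat -> nat.
Hypothesis F_gt0 : forall n, (0 < n)%N -> (0 < F n)%N.

Lemma Ffact_gt0 n : (0 < Ffact F n)%N.
Proof. by elim: n => [|n IHn]; rewrite ?Ffact0 // FfactS muln_gt0 IHn F_gt0. Qed.

Lemma Ffact_neq0 n : ((Ffact F n)%:R : rat) != 0%R.
Proof. by rewrite pnatr_eq0 -lt0n Ffact_gt0. Qed.

Lemma Fbinomnn n : Fbinom F n n = 1%R.
Proof. by rewrite /Fbinom subnn Ffact0 mulr1 divff ?Ffact_neq0. Qed.

Lemma Fbinomn0 n : Fbinom F n 0 = 1%R.
Proof. by rewrite /Fbinom subn0 Ffact0 mul1r divff ?Ffact_neq0. Qed.

Lemma Fbinom_pascal k m a b :
  F (k.+1 + m.+1) = (a * F k.+1 + b * F m.+1)%N ->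
  Fbinom F (k.+1 + m.+1) k.+1 =
    (a%:R * Fbinom F (k.+1 + m) k + b%:R * Fbinom F (k.+1 + m) k.+1)%R.
Proof.
move=> F_add; rewrite [in Fbinom F _ k]addSnnS.
rewrite (Fbinom_addn F k.+1 m.+1) (Fbinom_addn F k m.+1) (Fbinom_addn F k.+1 m).
have -> : (k.+1 + m.+1 = (k + m.+1).+1)%N by rewrite addSn.
rewrite FfactS -addSn F_add -addSnnS (FfactS F k) (FfactS F m).
have F_k : ((F k.+1)%:R : rat) != 0%R by rewrite pnatr_eq0 -lt0n F_gt0.
have F_m : ((F m.+1)%:R : rat) != 0%R by rewrite pnatr_eq0 -lt0n F_gt0.
move: (Ffact_neq0 k) (Ffact_neq0 m); rewrite !natrM !natrD !natrM => fact_k fact_m.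
by field; rewrite F_k F_m fact_k fact_m.
Qed.

End PositiveSequence.

Theorem corollary3 (F : nat -> nat) (lamK lamM : nat -> nat -> nat) :
  in_T_lambda F lamK lamM ->
  (forall n k : nat, (2 <= n)%N -> (1 <= k <= n - 1)%N ->
     Fbinom F n k =
       GRing.add (GRing.mul ((lamK k (n - k)%N)%:R) (Fbinom F (n - 1)%N (k - 1)%N))
                 (GRing.mul ((lamM k (n - k)%N)%:R) (Fbinom F (n - 1)%N k))) /\
  (forall n : nat, Fbinom F n n = 1%R /\ Fbinom F n 0 = 1%R).
Proof.
move=> [F_gt0 F_add]; split; last by move=> n; rewrite (Fbinomnn F_gt0) (Fbinomn0 F_gt0).
move=> n [//|k] _ /andP[_ k_lt_n].
have [m ->] : exists m, n = (k.+1 + m.+1)%N by exists (n - k.+2); lia.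
rewrite addKn !subn1 [in _.-1]addnS /=.
exact (Fbinom_pascal F_gt0 (F_add k.+1 m.+1 isT isT)).
Qed.
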